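(* Let $\mathcal V$ be a variety (not assumed to be congruence modular). Then $\mathcal V$ is congruence distributive if and only if for every $A\in\mathcal V$ and all $\alpha,\beta,\gamma\in\mathrm{Con}(A)$: (i) $[\alpha,\beta]=\alpha\cap\beta$, and (ii) $[\alpha\vee\beta,\gamma]=[\alpha,\gamma]\vee[\beta,\gamma]$.
   Context: The commutator in an algebra $A$: for $\alpha,\beta\in\mathrm{Con}(A)$, let $M(\alpha,\beta)$ be the set of $2\times 2$ matrices $\begin{pmatrix} t(\mathbf a^1,\mathbf b^1)& t(\mathbf a^1,\mathbf b^2)\\ t(\mathbf a^2,\mathbf b^1)& t(\mathbf a^2,\mathbf b^2)\end{pmatrix}$ where $t$ is an $(m+n)$-ary term, $a^1_i\,\alpha\,a^2_i$ for $i\le m$, $b^1_j\,\beta\,b^2_j$ for $j\le n$; $C(\alpha,\beta;\delta)$ means for every such matrix $t(\mathbf a^1,\mathbf b^1)\,\delta\,t(\mathbf a^1,\mathbf b^2)$ implies $t(\mathbf a^2,\mathbf b^1)\,\delta\,t(\mathbf a^2,\mathbf b^2)$; $[\alpha,\beta]$ is the meet of all $\delta\in\mathrm{Con}(A)$ with $C(\alpha,\beta;\delta)$. A variety is congruence distributive if the congruence lattice of each member is distributive. *)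

From mathcomp Require Import all_boot.
Set Implicit Arguments. Unset Strict Implicit. Unset Printing Implicit Defensive.

Record signature := Signature { op_sym : Type; arity : op_sym -> nat }.

Record algebra (S : signature) := Algebra {
  carrier :> Type;
  op : forall f : op_sym S, ('I_(arity f) -> carrier) -> carrier }.

Inductive term (S : signature) (V : Type) : Type :=
| Var : V -> term S V
| App : forall f : op_sym S, ('I_(arity f) -> term S V) -> term S V.
Arguments Var {S V}.
Arguments App {S V}.

Fixpoint eval (S : signature) (A : algebra S) (V : Type) (s : V -> A)
  (t : term S V) : A :=
  match t with
  | Var v => s v
  | App f ts => @op S A f (fun i => eval s (ts i))
  end.

(* Varieties as equational classes: the class of models of a set of
   identities in countably many variables. *)
Definition models (S : signature) (E : term S nat * term S nat -> Prop)
  (A : algebra S) : Prop :=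
  forall p, E p -> forall s : nat -> A, eval s p.1 = eval s p.2.

Definition crel (T : Type) := T -> T -> Prop.

Definition rel_eq (T : Type) (R R' : crel T) : Prop :=
  forall x y, R x y <-> R' x y.

Definition is_congruence (S : signature) (A : algebra S) (R : crel A) : Prop :=
  [/\ (forall x, R x x),
      (forall x y, R x y -> R y x),
      (forall x y z, R x y -> R y z -> R x z) &
      (forall f (xs ys : 'I_(arity f) -> A),
          (forall i, R (xs i) (ys i)) -> R (@op S A f xs) (@op S A f ys))].
Arguments is_congruence {S} A R.

Definition con_meet (T : Type) (R R' : crel T) : crel T :=
  fun x y => R x y /\ R' x y.

Definition con_join (S : signature) (A : algebra S) (R R' : crel A) : crel A :=
  fun x y => forall D : crel A, is_congruence A D ->
    (forall u v, R u v -> D u v) -> (forall u v, R' u v -> D u v) -> D x y.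
Arguments con_join {S} A R R'.

Definition mix (T : Type) (m n : nat) (a : 'I_m -> T) (b : 'I_n -> T)
  (v : 'I_m + 'I_n) : T :=
  match v with inl i => a i | inr j => b j end.

Definition centralizes (S : signature) (A : algebra S) (al be de : crel A) : Prop :=
  forall (m n : nat) (t : term S ('I_m + 'I_n))
         (a1 a2 : 'I_m -> A) (b1 b2 : 'I_n -> A),
    (forall i, al (a1 i) (a2 i)) -> (forall j, be (b1 j) (b2 j)) ->
    de (eval (mix a1 b1) t) (eval (mix a1 b2) t) ->
    de (eval (mix a2 b1) t) (eval (mix a2 b2) t).
Arguments centralizes {S} A al be de.

Definition commutator (S : signature) (A : algebra S) (al be : crel A) : crel A :=
  fun x y => forall D : crel A, is_congruence A D -> centralizes A al be D -> D x y.
Arguments commutator {S} A al be.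

Definition congruence_distributive (S : signature) (K : algebra S -> Prop) : Prop :=
  forall A : algebra S, K A ->
  forall al be ga : crel A,
    is_congruence A al -> is_congruence A be -> is_congruence A ga ->
    rel_eq (con_meet al (con_join A be ga))
           (con_join A (con_meet al be) (con_meet al ga)).

From mathcomp Require Import all_boot.
From Stdlib Require Import Relations FunctionalExtensionality ProofIrrelevance ClassicalEpsilon.
Set Implicit Arguments. Unset Strict Implicit. Unset Printing Implicit Defensive.

(* Given (i), distributivity reads
     α ∧ (β ∨ γ) = [β ∨ γ, α] = [β, α] ∨ [γ, α] = (α ∧ β) ∨ (α ∧ γ),
   and conversely distributivity together with (i) gives (ii).  The content is
   α ∧ β ≤ [α, β] in a congruence distributive variety.  The algebra F of
   ternary term operations of A lies in the variety; distributivity of Con(F),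
   applied to the kernels of the substitutions x = z, x = y and y = z, yields
   Jónsson terms: a chain x = t_0, ..., t_n = z of ternary terms with
   t_i(a, y, a) = a, each consecutive pair agreeing on all (a, a, c) or on all
   (a, c, c).  If C(α, β; δ) and a (α ∧ β) b, the term condition gives
   δ(a, t_i(a, b, b)) <-> δ(a, t_i(a, a, b)), so δ(a, t_i(a, b, b)) travels
   along the chain from t_0 to t_n, i.e. a δ b. *)

Section RelEq.
Variable T : Type.
Implicit Types R : crel T.

Lemma rel_eq_sym R R' : rel_eq R R' -> rel_eq R' R.
Proof. by move=> E x y; rewrite E. Qed.

Lemma rel_eq_trans R1 R2 R3 : rel_eq R1 R2 -> rel_eq R2 R3 -> rel_eq R1 R3.
Proof. by move=> E1 E2 x y; rewrite E1 E2. Qed.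

Lemma con_meetC R R' : rel_eq (con_meet R R') (con_meet R' R).
Proof. by move=> x y; split=> -[]. Qed.

End RelEq.

Section Congruences.
Variables (S : signature) (A : algebra S).
Implicit Types R : crel A.

Lemma eval_cong R (V : Type) (s s' : V -> A) (t : term S V) :
  is_congruence A R -> (forall v, R (s v) (s' v)) -> R (eval s t) (eval s' t).
Proof. by move=> [_ _ _ opR] sR; elim: t => [v|f ts IH] /=; [apply: sR | apply: opR]. Qed.

Lemma con_meet_cong R R' :
  is_congruence A R -> is_congruence A R' -> is_congruence A (con_meet R R').
Proof.
move=> [r1 s1 t1 c1] [r2 s2 t2 c2]; split.
- by [].
- by move=> x y [? ?]; split; [apply: s1 | apply: s2].
- by move=> x y z [? ?] [? ?]; split; [apply: t1 | apply: t2]; eassumption.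
- by move=> f xs ys xys; split; [apply: c1 | apply: c2] => i; case: (xys i).
Qed.

Lemma con_join_cong R R' : is_congruence A (con_join A R R').
Proof.
split.
- by move=> x D [].
- by move=> x y xy D DD DR DR'; case: (DD) => _ s _ _; apply: s; apply: xy.
- move=> x y z xy yz D DD DR DR'; case: (DD) => _ _ t _.
  exact: t (xy D DD DR DR') (yz D DD DR DR').
- move=> f xs ys xys D DD DR DR'; case: (DD) => _ _ _ c.
  by apply: c => i; apply: xys.
Qed.

Lemma con_join_ext R1 R2 R1' R2' :
  rel_eq R1 R2 -> rel_eq R1' R2' ->
  rel_eq (con_join A R1 R1') (con_join A R2 R2').
Proof.
move=> E E' x y; split=> J D DD DR DR'; apply: J => // u v.
- by move/E; apply: DR.
- by move/E'; apply: DR'.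
- by move/E; apply: DR.
- by move/E'; apply: DR'.
Qed.

Lemma centralizes_left al be : is_congruence A al -> centralizes A al be al.
Proof.
move=> alC m n t a1 a2 b1 b2 a12 _ al11; case: (alC) => _ s tr _.
have al_a b : al (eval (mix a1 b) t) (eval (mix a2 b) t).
  by apply: eval_cong => // -[i|j] /=; [apply: a12 | case: alC].
exact: tr (s _ _ (al_a b1)) (tr _ _ _ al11 (al_a b2)).
Qed.

Lemma centralizes_right al be : is_congruence A be -> centralizes A al be be.
Proof.
move=> beC m n t a1 a2 b1 b2 _ b12 _.
by apply: eval_cong => // -[i|j] /=; [case: beC | apply: b12].
Qed.

Lemma commutator_sub_meet al be x y :
  is_congruence A al -> is_congruence A be ->
  commutator A al be x y -> con_meet al be x y.
Proof.
move=> alC beC comm; split; apply: comm => //.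
- exact: centralizes_left.
- exact: centralizes_right.
Qed.

End Congruences.

Section JoinAsClosure.
Variables (S : signature) (A : algebra S).
Implicit Types R : crel A.

Definition argwise_compatible R :=
  forall f (w : 'I_(arity f) -> A) j u v,
    R u v -> R (op [eta w with j |-> u]) (op [eta w with j |-> v]).

Lemma congruence_argwise_compatible R : is_congruence A R -> argwise_compatible R.
Proof. by move=> [r _ _ c] f w j u v uv; apply: c => i /=; case: (i == j). Qed.

Lemma argwise_compatible_union R1 R2 :
  argwise_compatible R1 -> argwise_compatible R2 -> argwise_compatible (union A R1 R2).
Proof. by move=> c1 c2 f w j u v [uv|uv]; [left; apply: c1 | right; apply: c2]. Qed.

Lemma argwise_compatible_rt R : argwise_compatible R -> argwise_compatible (clos_refl_trans A R).
Proof.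
move=> c f w j u v; elim=> {u v} [u v uv|u|u v z _ uv _ vz].
- exact/rt_step/c.
- exact: rt_refl.
- exact: rt_trans uv vz.
Qed.

Lemma rt_compatible R :
  argwise_compatible R -> forall f (xs ys : 'I_(arity f) -> A),
  (forall i, clos_refl_trans A R (xs i) (ys i)) ->
  clos_refl_trans A R (op xs) (op ys).
Proof.
move=> c f xs ys xys.
pose splice k (i : 'I_(arity f)) := if (i < k)%N then ys i else xs i.
suff rt_splice k : clos_refl_trans A R (op xs) (op (splice k)).
  rewrite (_ : ys = splice (arity f)) //.
  by apply: functional_extensionality => i; rewrite /splice ltn_ord.
elim: k => [|k IH].
  rewrite (_ : splice 0 = xs); first exact: rt_refl.
  exact: functional_extensionality.
case: (ltnP k (arity f)) => [lt_k|le_k]; last first.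
  rewrite (_ : splice k.+1 = splice k) //; apply: functional_extensionality => i.
  by rewrite /splice !(leq_trans (ltn_ord i)) // ltnW.
pose j := Ordinal lt_k.
have splice_k : splice k = [eta splice k with j |-> xs j].
  apply: functional_extensionality => i /=; rewrite /splice.
  by case: eqP => [->|]; rewrite ?ltnn.
have splice_k1 : splice k.+1 = [eta splice k with j |-> ys j].
  apply: functional_extensionality => i /=; rewrite /splice ltnS leq_eqVlt.
  have [->|ne] := eqVneq i j; first by rewrite /= !eqxx.
  by rewrite (negbTE (ne : nat_of_ord i != k)).
apply: rt_trans IH _; rewrite splice_k splice_k1.
exact/argwise_compatible_rt.
Qed.

Lemma rt_union_cong R1 R2 :
  is_congruence A R1 -> is_congruence A R2 ->
  is_congruence A (clos_refl_trans A (union A R1 R2)).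
Proof.
move=> C1 C2; split.
- exact: rt_refl.
- move=> x y; elim=> {x y} [x y xy|x|x y z _ yx _ zy].
  + apply: rt_step; case: xy => xy; [left | right].
    * by case: C1 => _ s _ _; apply: s.
    * by case: C2 => _ s _ _; apply: s.
  + exact: rt_refl.
  + exact: rt_trans zy yx.
- exact: rt_trans.
- by apply: rt_compatible; apply: argwise_compatible_union; apply: congruence_argwise_compatible.
Qed.

Lemma con_join_sub_rt R1 R2 x y :
  is_congruence A R1 -> is_congruence A R2 ->
  con_join A R1 R2 x y -> clos_refl_trans A (union A R1 R2) x y.
Proof.
move=> C1 C2; apply; first exact: rt_union_cong.
- by move=> u v uv; apply: rt_step; left.
- by move=> u v uv; apply: rt_step; right.
Qed.

End JoinAsClosure.

Section TermOperations.
Variables (S : signature) (V : Type) (A : algebra S).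

Definition is_term_op (g : (V -> A) -> A) :=
  exists t : term S V, forall s, g s = eval s t.

Definition term_op := {g | is_term_op g}.

Definition term_of (u : term_op) : term S V :=
  proj1_sig (constructive_indefinite_description _ (proj2_sig u)).

Lemma term_ofP (u : term_op) s : sval u s = eval s (term_of u).
Proof. exact: (proj2_sig (constructive_indefinite_description _ (proj2_sig u))). Qed.

Lemma term_op_inj (u v : term_op) : sval u = sval v -> u = v.
Proof. by apply: eq_sig_hprop => g; apply: proof_irrelevance. Qed.

Lemma is_term_op_op f (us : 'I_(arity f) -> term_op) :
  is_term_op (fun s => op (fun i => sval (us i) s)).
Proof.
exists (App f (fun i => term_of (us i))) => s /=.
by congr op; apply: functional_extensionality => i; apply: term_ofP.
Qed.

Definition term_op_algebra : algebra S :=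
  @Algebra S term_op (fun f us => exist _ _ (is_term_op_op us)).

Lemma sval_eval (W : Type) (s : W -> term_op_algebra) (t : term S W) x :
  sval (eval s t) x = eval (fun w => sval (s w) x) t.
Proof.
elim: t => [w|f ts IH] //=.
by congr op; apply: functional_extensionality => i; apply: IH.
Qed.

Lemma term_op_models E : models E A -> models E term_op_algebra.
Proof.
move=> AE p Ep s; apply: term_op_inj; apply: functional_extensionality => x.
by rewrite !sval_eval; apply: AE.
Qed.

Lemma is_term_op_proj v : is_term_op (fun s => s v).
Proof. by exists (Var v). Qed.

Definition proj_op (v : V) : term_op_algebra := exist _ _ (is_term_op_proj v).

Definition term_op_ker (P : Type) (sigma : P -> V -> A) : crel term_op_algebra :=
  fun u v => forall p, sval u (sigma p) = sval v (sigma p).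

Lemma term_op_ker_cong (P : Type) (sigma : P -> V -> A) :
  is_congruence term_op_algebra (term_op_ker sigma).
Proof.
split=> [//|u v uv p|u v w uv vw p|f us vs uvs p]; first by rewrite uv.
- by rewrite uv vw.
- by congr op; apply: functional_extensionality => i; apply: uvs.
Qed.

End TermOperations.

Section TernaryTermOperations.
Variables (S : signature) (A : algebra S).

(* x, y fill the two alpha-positions and z the beta-position of the term
   condition. *)
Definition xyz (x y z : A) : 'I_2 + 'I_1 -> A :=
  mix (fun i : 'I_2 => if val i == 0 then x else y) (fun _ => z).

Lemma centralizes_ternary al be D (t : term S ('I_2 + 'I_1)) x1 y1 z1 x2 y2 z2 :
  centralizes A al be D -> al x1 x2 -> al y1 y2 -> be z1 z2 ->
  D (eval (xyz x1 y1 z1) t) (eval (xyz x1 y1 z2) t) ->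
  D (eval (xyz x2 y2 z1) t) (eval (xyz x2 y2 z2) t).
Proof. by move=> C al_x al_y be_z; apply: C => // i; case: ifP. Qed.

Local Notation F := (term_op_algebra ('I_2 + 'I_1) A).
Local Notation px := (proj_op A (inl ord0)).
Local Notation py := (proj_op A (inl (@Ordinal 2 1 erefl))).
Local Notation pz := (proj_op A (inr ord0)).

Definition ker_xy : crel F := term_op_ker (fun p : A * A => xyz p.1 p.1 p.2).
Definition ker_yz : crel F := term_op_ker (fun p : A * A => xyz p.1 p.2 p.2).
Definition ker_xz : crel F := term_op_ker (fun p : A * A => xyz p.1 p.2 p.1).

Lemma cd_ternary_chain E :
  congruence_distributive (models E) -> models E A ->
  clos_refl_trans F (union F (con_meet ker_xz ker_xy) (con_meet ker_xz ker_yz)) px pz.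
Proof.
move=> CD AE.
have xzK : is_congruence F ker_xz := term_op_ker_cong _.
have xyK : is_congruence F ker_xy := term_op_ker_cong _.
have yzK : is_congruence F ker_yz := term_op_ker_cong _.
apply: con_join_sub_rt; try exact: con_meet_cong.
apply/(CD F (term_op_models AE) _ _ _ xzK xyK yzK); split=> [//|].
have [_ _ trans _] := con_join_cong ker_xy ker_yz.
by apply: (trans _ py) => D _ xyD yzD; [apply: xyD | apply: yzD].
Qed.

Lemma centralizes_ker_xz al be D a b (u : F) :
  is_congruence A al -> centralizes A al be D -> al a b -> be a b ->
  ker_xz u px -> D a (sval u (xyz a b b)) <-> D a (sval u (xyz a a b)).
Proof.
move=> [al_refl al_sym _ _] C ab_al ab_be xz_u.
have u_a y : eval (xyz a y a) (term_of u) = a by rewrite -term_ofP; apply: (xz_u (a, y)).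
rewrite !term_ofP; split.
- have := centralizes_ternary (t := term_of u) C (al_refl a) (al_sym _ _ ab_al) ab_be.
  by rewrite !u_a.
- by have := centralizes_ternary (t := term_of u) C (al_refl a) ab_al ab_be; rewrite !u_a.
Qed.

Lemma meet_sub_commutator E al be a b :
  congruence_distributive (models E) -> models E A ->
  is_congruence A al -> con_meet al be a b -> commutator A al be a b.
Proof.
move=> CD AE alC [ab_al ab_be] D [D_refl _ _ _] C.
pose Inv (u : F) := ker_xz u px /\ D a (sval u (xyz a b b)).
suff Inv_rt u v :
    clos_refl_trans F (union F (con_meet ker_xz ker_xy) (con_meet ker_xz ker_yz)) u v ->
    Inv u -> Inv v.
  by case: (Inv_rt _ _ (cd_ternary_chain CD AE) (conj (fun _ => erefl) (D_refl a))).
elim=> {u v} [u v [[xz_uv xy_uv]|[xz_uv yz_uv]]|//|u v w _ uv _ vw].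
- move=> [xz_u D_u]; have xz_v : ker_xz v px by move=> p; rewrite -xz_uv xz_u.
  split=> //; apply/(centralizes_ker_xz alC C ab_al ab_be xz_v).
  by rewrite -(xy_uv (a, b)); apply/(centralizes_ker_xz alC C ab_al ab_be xz_u).
- by move=> [xz_u D_u]; split; [move=> p; rewrite -xz_uv xz_u | rewrite -(yz_uv (a, b))].
- by move/uv/vw.
Qed.

End TernaryTermOperations.

Section CommutatorLaws.
Variables (S : signature) (A : algebra S).

Definition con_distributive :=
  forall al be ga : crel A,
    is_congruence A al -> is_congruence A be -> is_congruence A ga ->
    rel_eq (con_meet al (con_join A be ga))
           (con_join A (con_meet al be) (con_meet al ga)).

Definition commutator_is_meet :=
  forall al be : crel A, is_congruence A al -> is_congruence A be ->
    rel_eq (commutator A al be) (con_meet al be).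

Definition commutator_join_distr :=
  forall al be ga : crel A,
    is_congruence A al -> is_congruence A be -> is_congruence A ga ->
    rel_eq (commutator A (con_join A al be) ga)
           (con_join A (commutator A al ga) (commutator A be ga)).

Lemma commutator_join_distr_of_meet :
  commutator_is_meet -> con_distributive -> commutator_join_distr.
Proof.
move=> comm_meet distr al be ga alC beC gaC.
apply: rel_eq_trans (comm_meet _ _ (con_join_cong al be) gaC) _.
apply: rel_eq_trans (con_meetC _ _) _.
apply: rel_eq_trans (distr _ _ _ gaC alC beC) _.
apply: rel_eq_trans (con_join_ext (con_meetC _ _) (con_meetC _ _)) _.
by apply: rel_eq_sym; apply: con_join_ext; apply: comm_meet.
Qed.

Lemma con_distributive_of_commutator :
  commutator_is_meet -> commutator_join_distr -> con_distributive.
Proof.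
move=> comm_meet comm_join al be ga alC beC gaC.
apply: rel_eq_trans (con_meetC _ _) _.
apply: rel_eq_trans (rel_eq_sym (comm_meet _ _ (con_join_cong be ga) alC)) _.
apply: rel_eq_trans (comm_join _ _ _ beC gaC alC) _.
apply: rel_eq_trans (con_join_ext (comm_meet _ _ beC alC) (comm_meet _ _ gaC alC)) _.
exact: con_join_ext (con_meetC _ _) (con_meetC _ _).
Qed.

End CommutatorLaws.

Theorem theorem6p1 (S : signature) (E : term S nat * term S nat -> Prop) :
  congruence_distributive (models E) <->
  (forall A : algebra S, models E A ->
   forall al be ga : crel A,
     is_congruence A al -> is_congruence A be -> is_congruence A ga ->
     rel_eq (commutator A al be) (con_meet al be) /\
     rel_eq (commutator A (con_join A al be) ga)
            (con_join A (commutator A al ga) (commutator A be ga))).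
Proof.
split=> [CD A AE al be ga alC beC gaC | comm_laws A AE].
- have comm_meet : commutator_is_meet A.
    move=> X Y XC YC x y; split; first exact: commutator_sub_meet.
    exact: meet_sub_commutator CD AE XC.
  split; first exact: comm_meet.
  exact: commutator_join_distr_of_meet comm_meet (CD A AE) al be ga alC beC gaC.
- apply: con_distributive_of_commutator.
  + by move=> al be alC beC; case: (comm_laws A AE al be al alC beC alC).
  + by move=> al be ga alC beC gaC; case: (comm_laws A AE al be ga alC beC gaC).
Qed.
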